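(* Let $(X,\leq,\cdot)$ be a Jacobi commutator semi-lattice, let $x\in X$, and let $g:X\to X$ be the inner derivation defined by $g(s)=x\cdot s$ for each $s\in X$. Then for all non-negative integers $i$ and $j$, $$g^i(x)\cdot g^j(x)\leq g^{i+j+1}(x),$$ where $g^0$ denotes the identity map.
   Context: A join semi-lattice is a poset $(X,\leq)$ with a binary operation $\vee$ that is idempotent, commutative and associative, such that $a\leq b \iff a\vee b=b$ for all $a,b\in X$. A commutator semi-lattice is a triple $(X,\leq,\cdot)$ where $(X,\leq,\vee)$ is a join semi-lattice and $\cdot$ is a binary operation on $X$ such that: $\cdot$ is commutative; $a\cdot b\leq b$ for all $a,b$; and $a\cdot(b\vee c)=(a\cdot b)\vee(a\cdot c)$ for all $a,b,c$. It is a Jacobi commutator semi-lattice if moreover $a\cdot(b\cdot c)\leq ((a\cdot b)\cdot c)\vee(b\cdot(a\cdot c))$ for all $a,b,c\in X$. A derivation of a commutator semi-lattice is a map $f:X\to X$ preserving joins ($f(a\vee b)=f(a)\vee f(b)$) and satisfying $f(a\cdot b)\leq (f(a)\cdot b)\vee(a\cdot f(b))$ for all $a,b$; it is inner if $f=x\cdot-$ for some $x\in X$. *)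

From Stdlib Require Import Arith.

Record is_join_semilattice (X : Type) (le : X -> X -> Prop) (join : X -> X -> X)
  : Prop := {
  jsl_refl : forall a, le a a;
  jsl_antisym : forall a b, le a b -> le b a -> a = b;
  jsl_trans : forall a b c, le a b -> le b c -> le a c;
  jsl_idem : forall a, join a a = a;
  jsl_comm : forall a b, join a b = join b a;
  jsl_assoc : forall a b c, join a (join b c) = join (join a b) c;
  jsl_le_join : forall a b, le a b <-> join a b = b
}.

Record is_commutator_semilattice (X : Type) (le : X -> X -> Prop)
  (join : X -> X -> X) (cdot : X -> X -> X) : Prop := {
  csl_jsl : is_join_semilattice X le join;
  csl_comm : forall a b, cdot a b = cdot b a;
  csl_le : forall a b, le (cdot a b) b;
  csl_distr : forall a b c, cdot a (join b c) = join (cdot a b) (cdot a c)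
}.

Record is_jacobi_commutator_semilattice (X : Type) (le : X -> X -> Prop)
  (join : X -> X -> X) (cdot : X -> X -> X) : Prop := {
  jcsl_csl : is_commutator_semilattice X le join cdot;
  jcsl_jacobi : forall a b c,
    le (cdot a (cdot b c)) (join (cdot (cdot a b) c) (cdot b (cdot a c)))
}.

Definition inner_der {X : Type} (cdot : X -> X -> X) (x : X) : X -> X :=
  fun s => cdot x s.

Fixpoint iter {X : Type} (n : nat) (f : X -> X) (s : X) : X :=
  match n with
  | O => s
  | S m => f (iter m f s)
  end.

From Stdlib Require Import Arith Lia.

(* Induction on i, for all j at once.  Writing a_n := g^n(x), commutativity and
   the Jacobi inequality give
     a_(i+1) . a_j = a_j . (x . a_i) <= (a_(j+1) . a_i) \/ x . (a_j . a_i),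
   and both joinands are bounded by a_(i+j+2): the first by the induction
   hypothesis at j+1, the second by the induction hypothesis at j followed by
   monotonicity of x . - . *)

Section JoinSemilattice.

Variables (X : Type) (le : X -> X -> Prop) (join : X -> X -> X).
Hypothesis HL : is_join_semilattice X le join.

Lemma join_lub (a b c : X) : le a c -> le b c -> le (join a b) c.
Proof.
  intros Hac Hbc.
  apply (jsl_le_join _ _ _ HL) in Hac, Hbc.
  apply (jsl_le_join _ _ _ HL).
  rewrite <- (jsl_assoc _ _ _ HL), Hbc, Hac.
  reflexivity.
Qed.

End JoinSemilattice.

Section CommutatorSemilattice.

Variables (X : Type) (le : X -> X -> Prop) (join cdot : X -> X -> X).
Hypothesis HC : is_commutator_semilattice X le join cdot.

Lemma cdot_monotone (a b c : X) : le b c -> le (cdot a b) (cdot a c).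
Proof.
  intros Hbc.
  pose proof (csl_jsl _ _ _ _ HC) as HL.
  apply (jsl_le_join _ _ _ HL) in Hbc.
  apply (jsl_le_join _ _ _ HL).
  rewrite <- (csl_distr _ _ _ _ HC), Hbc.
  reflexivity.
Qed.

End CommutatorSemilattice.

Theorem proposition2p8 (X : Type) (le : X -> X -> Prop) (join : X -> X -> X)
  (cdot : X -> X -> X)
  (HJ : is_jacobi_commutator_semilattice X le join cdot) (x : X) :
  forall i j : nat,
    le (cdot (iter i (inner_der cdot x) x) (iter j (inner_der cdot x) x))
       (iter (i + j + 1) (inner_der cdot x) x).
Proof.
  pose proof (jcsl_csl _ _ _ _ HJ) as HC.
  pose proof (csl_jsl _ _ _ _ HC) as HL.
  set (a := fun n => iter n (inner_der cdot x) x).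
  change (forall i j, le (cdot (a i) (a j)) (a (i + j + 1))).
  induction i as [|i IH]; intros j.
  - replace (0 + j + 1) with (S j) by lia.
    apply (jsl_refl _ _ _ HL).
  - change (a (S i)) with (cdot x (a i)).
    rewrite (csl_comm _ _ _ _ HC).
    eapply (jsl_trans _ _ _ HL); [apply (jcsl_jacobi _ _ _ _ HJ) |].
    apply (join_lub _ _ _ HL).
    + rewrite (csl_comm _ _ _ _ HC (a j) x), (csl_comm _ _ _ _ HC _ (a i)).
      change (cdot x (a j)) with (a (S j)).
      replace (S i + j + 1) with (i + S j + 1) by lia.
      apply IH.
    + replace (S i + j + 1) with (S (i + j + 1)) by lia.
      apply (cdot_monotone _ _ _ _ HC).
      rewrite (csl_comm _ _ _ _ HC).
      apply IH.
Qed.
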